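(* Let $n\ge p\ge1$, $U\in St(n,p)$, $\Delta\in T_USt(n,p)$, and let $\gamma(t)=\mathrm{Exp}_U(t\Delta)$ be the geodesic of $St(n,p)$ under the Euclidean metric, regarded as a curve in $\mathbb R^{n\times p}$. Then there exist $m\in\mathbb N$, real numbers $a_1,\dots,a_m,b_1,\dots,b_m$, a matrix $C_0\in\mathbb R^{n\times p}$ and matrices $E_1,\dots,E_{2m}\in\mathbb R^{n\times p}$ that are orthonormal with respect to $\langle X,Y\rangle=\operatorname{tr}(X^TY)$ such that for all $t\in\mathbb R$ $$\gamma(t)=C_0+\sum_{i=1}^m a_i\big(\cos(b_it)\,E_{2i-1}+\sin(b_it)\,E_{2i}\big).$$ Equivalently, up to a Euclidean isometry, $\gamma(t)=(a_1\cos(b_1t),a_1\sin(b_1t),\dots,a_m\cos(b_mt),a_m\sin(b_mt))^T$ (padded with zeros).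
   Context: $St(n,p)=\{U\in\mathbb R^{n\times p}: U^TU=I_p\}$ with $T_USt(n,p)=\{\Delta: U^T\Delta=-\Delta^TU\}$. The Euclidean metric is the restriction of $\operatorname{tr}(X^TY)$ to tangent spaces, and $\mathrm{Exp}_U$ is its Riemannian exponential map; explicitly $\mathrm{Exp}_U(t\Delta)=\begin{pmatrix}U&Q\end{pmatrix}\exp_m\!\left(t\begin{pmatrix}2A&-B^T\\ B&0\end{pmatrix}\right)\begin{pmatrix}I_p\\0\end{pmatrix}\exp_m(-tA)$ with $A=U^T\Delta$, $QB=(I-UU^T)\Delta$, $Q$ with orthonormal columns orthogonal to $U$, $\exp_m$ the matrix exponential. *)

From HB Require Import structures.
From mathcomp Require Import all_boot all_order all_algebra.
From mathcomp Require Import all_classical all_reals all_analysis.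
Set Implicit Arguments. Unset Strict Implicit. Unset Printing Implicit Defensive.
Import Order.TTheory GRing.Theory Num.Theory.
Import numFieldNormedType.Exports.
Local Open Scope ring_scope.

Definition expm (R : realType) (q : nat) (A : 'M[R]_q) : 'M[R]_q :=
  limn (series (fun k : nat => (k`!%:R)^-1 *: A ^+ k)).

Definition frob (R : realType) (n p : nat) (X Y : 'M[R]_(n, p)) : R :=
  \tr (X^T *m Y).

Definition stiefel (R : realType) (n p : nat) (U : 'M[R]_(n, p)) : Prop :=
  U^T *m U = 1%:M.
Definition tangent_stiefel (R : realType) (n p : nat) (U D : 'M[R]_(n, p)) : Prop :=
  U^T *m D = - (D^T *m U).

Definition QB_decomp (R : realType) (n p k : nat) (U D : 'M[R]_(n, p))
  (Q : 'M[R]_(n, k)) (B : 'M[R]_(k, p)) : Prop :=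
  [/\ Q^T *m Q = 1%:M, U^T *m Q = 0 & Q *m B = (1%:M - U *m U^T) *m D].

(* Exp_U(t D) for the Euclidean metric, explicit formula of the context. *)
Definition stiefel_exp (R : realType) (n p k : nat) (U D : 'M[R]_(n, p))
  (Q : 'M[R]_(n, k)) (B : 'M[R]_(k, p)) (t : R) : 'M[R]_(n, p) :=
  let A := U^T *m D in
  row_mx U Q
  *m expm (t *: block_mx (2%:R *: A) (- B^T) B (0 : 'M[R]_(k, k)))
  *m col_mx (1%:M : 'M[R]_p) (0 : 'M[R]_(k, p))
  *m expm (- t *: A).

From HB Require Import structures.
From mathcomp Require Import all_boot all_order all_algebra.
From mathcomp Require Import all_classical all_reals all_analysis.
From mathcomp Require Import lra complex spectral.
Import Order.TTheory GRing.Theory Num.Theory.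
Import numFieldNormedType.Exports.
Set Implicit Arguments. Unset Strict Implicit. Unset Printing Implicit Defensive.

(* Write the geodesic as t |-> Z e^(tM) W e^(-tA), where Z = [U Q] has
   orthonormal columns, W = [1; 0], and both the block generator M and
   A = U^T D are skew-symmetric.  Over C the spectral theorem for these normal
   matrices gives e^(tM) = sum_j e^(i th_j t) K_j with orthogonal projectors
   K_j, so the geodesic is the real part of sum_w e^(i w t) X_w, where
   X_w = Z K_j W K'_l has frequency w = th_j - th'_l.  The projector relations
   make the X_w Hermitian-orthogonal for distinct frequencies and, since K_j^T
   is the projector for -th_j, bilinearly orthogonal unless the frequencies are
   opposite.  Collecting the terms of frequency +f and -f into one complex
   matrix Y_f, these relations say precisely that Re Y_f and Im Y_f are
   orthogonal, of equal norm, and orthogonal to the other groups; normalising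
   them yields the orthonormal frame, with the norms as radii. *)

Local Open Scope classical_set_scope.
Local Open Scope ring_scope.
Local Open Scope sesquilinear_scope.

Local Notation Re := complex.Re.
Local Notation Im := complex.Im.
Local Notation cmx X := (map_mx (real_complex _) X).
Local Notation remx X := (map_mx (@complex.Re _) X).
Local Notation immx X := (map_mx (@complex.Im _) X).

Section Frobenius.
Variables (R : realType) (n p : nat).
Implicit Types X Y : 'M[R]_(n, p).

Lemma trmx_mul_traceE (T : comPzRingType) (X Y : 'M[T]_(n, p)) :
  \tr (X^T *m Y) = \sum_(i < n) \sum_(j < p) X i j * Y i j.
Proof.
rewrite /mxtrace exchange_big /=; apply: eq_bigr => j _.
by rewrite mxE; apply: eq_bigr => i _; rewrite mxE.
Qed.

Lemma frobE X Y : frob X Y = \sum_(i < n) \sum_(j < p) X i j * Y i j.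
Proof. exact: trmx_mul_traceE. Qed.

Lemma frobC X Y : frob X Y = frob Y X.
Proof. by rewrite !frobE; apply: eq_bigr => i _; apply: eq_bigr => j _; rewrite mulrC. Qed.

Lemma frob_ge0 X : 0 <= frob X X.
Proof. by rewrite frobE; do 2![apply: sumr_ge0 => ? _]; rewrite -expr2 sqr_ge0. Qed.

Lemma frob_eq0 X : (frob X X == 0) = (X == 0).
Proof.
apply/idP/eqP => [|->]; last first.
  by rewrite frobE big1 // => i _; rewrite big1 // => j _; rewrite mxE mul0r.
rewrite frobE psumr_eq0 => [/allP X0|i _]; last first.
  by apply: sumr_ge0 => j _; rewrite -expr2 sqr_ge0.
apply/matrixP => i j; move: (X0 i (mem_index_enum _)).
rewrite psumr_eq0 => [/allP/(_ j (mem_index_enum _))|k _]; last by rewrite -expr2 sqr_ge0.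
by rewrite mulf_eq0 orbb mxE => /eqP.
Qed.

Lemma frobZl k X Y : frob (k *: X) Y = k * frob X Y.
Proof. by rewrite /frob linearZ /= -scalemxAl linearZ. Qed.

Lemma frobNl X Y : frob (- X) Y = - frob X Y.
Proof. by rewrite -scaleN1r frobZl mulN1r. Qed.

Lemma frobNr X Y : frob X (- Y) = - frob X Y.
Proof. by rewrite frobC frobNl frobC. Qed.

Lemma frob_sumZ (I J : finType) (c : I -> R) (d : J -> R)
    (X : I -> 'M[R]_(n, p)) (Y : J -> 'M[R]_(n, p)) :
  frob (\sum_a c a *: X a) (\sum_b d b *: Y b) =
  \sum_a \sum_b c a * d b * frob (X a) (Y b).
Proof.
rewrite /frob [_^T]linear_sum mulmx_suml raddf_sum; apply: eq_bigr => a _.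
rewrite mulmx_sumr raddf_sum; apply: eq_bigr => b _.
by rewrite !linearZ /= -scalemxAl !linearZ /= mulrA [d b * _]mulrC.
Qed.

End Frobenius.

Section ComplexMatrices.
Variable R : realType.
Local Notation C := R[i].

Definition expi (x : R) : C := (cos x +i* sin x)%C.

Lemma expiD x y : expi x * expi y = expi (x + y).
Proof. by rewrite /expi cosD sinD; apply/eqP; rewrite eq_complex /= eqxx addrC eqxx. Qed.

Lemma Re_mulc (x y : C) : Re (x * y) = Re x * Re y - Im x * Im y.
Proof. by case: x => a b; case: y. Qed.

Lemma Im_mulc (x y : C) : Im (x * y) = Re x * Im y + Im x * Re y.
Proof. by case: x => a b; case: y => c d /=; rewrite addrC. Qed.

Lemma Re_sum (I : Type) (r : seq I) (P : pred I) (F : I -> C) :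
  Re (\sum_(i <- r | P i) F i) = \sum_(i <- r | P i) Re (F i).
Proof. exact: (raddf_sum (@complex.Re R : Rcomplex R -> R)). Qed.

Lemma Im_sum (I : Type) (r : seq I) (P : pred I) (F : I -> C) :
  Im (\sum_(i <- r | P i) F i) = \sum_(i <- r | P i) Im (F i).
Proof. exact: (raddf_sum (@complex.Im R : Rcomplex R -> R)). Qed.

Lemma conjC_complexE (z : C) : z^* = conjc z.
Proof.
rewrite [z in LHS]Crect rmorphD rmorphM /= conjCi.
rewrite !conj_Creal ?Creal_Re ?Creal_Im // -complexRe -complexIm.
by case: z => a b; apply/eqP; rewrite eq_complex /=; apply/andP; split; apply/eqP; simpc; lra.
Qed.

Lemma Re_conjC (z : C) : Re z^* = Re z.
Proof. by rewrite conjC_complexE; case: z. Qed.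

Lemma Im_conjC (z : C) : Im z^* = - Im z.
Proof. by rewrite conjC_complexE; case: z. Qed.

Section Traces.
Variables n p : nat.
Implicit Types X Y : 'M[C]_(n, p).

Lemma Re_trace_trmx_mul X Y :
  Re (\tr (X^T *m Y)) = frob (remx X) (remx Y) - frob (immx X) (immx Y).
Proof.
rewrite trmx_mul_traceE !frobE Re_sum -sumrB; apply: eq_bigr => i _.
by rewrite Re_sum -sumrB; apply: eq_bigr => j _; rewrite Re_mulc !mxE.
Qed.

Lemma Im_trace_trmx_mul X Y :
  Im (\tr (X^T *m Y)) = frob (remx X) (immx Y) + frob (immx X) (remx Y).
Proof.
rewrite trmx_mul_traceE !frobE Im_sum -big_split; apply: eq_bigr => i _.
by rewrite Im_sum -big_split; apply: eq_bigr => j _; rewrite Im_mulc !mxE.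
Qed.

Lemma Re_trace_adj_mul X Y :
  Re (\tr (X^t* *m Y)) = frob (remx X) (remx Y) + frob (immx X) (immx Y).
Proof.
rewrite -map_trmx trmx_mul_traceE !frobE Re_sum -big_split; apply: eq_bigr => i _.
rewrite Re_sum -big_split; apply: eq_bigr => j _.
by rewrite !mxE Re_mulc Re_conjC Im_conjC mulNr opprK.
Qed.

Lemma Im_trace_adj_mul X Y :
  Im (\tr (X^t* *m Y)) = frob (remx X) (immx Y) - frob (immx X) (remx Y).
Proof.
rewrite -map_trmx trmx_mul_traceE !frobE Im_sum -sumrB; apply: eq_bigr => i _.
rewrite Im_sum -sumrB; apply: eq_bigr => j _.
by rewrite !mxE Im_mulc Re_conjC Im_conjC mulNr.
Qed.

End Traces.

Section RealImaginaryParts.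
Variables (m n : nat).

Lemma remx_cmx (G : 'M[R]_(m, n)) : remx (cmx G) = G.
Proof. by apply/matrixP => i j; rewrite !mxE. Qed.

Lemma immx_cmx (G : 'M[R]_(m, n)) : immx (cmx G) = 0.
Proof. by apply/matrixP => i j; rewrite !mxE. Qed.

Lemma cmx_remx (M : 'M[C]_(m, n)) : immx M = 0 -> cmx (remx M) = M.
Proof.
move=> /matrixP M_real; apply/matrixP => i j; move: (M_real i j); rewrite !mxE.
by case: (M i j) => a b /= ->.
Qed.

Lemma conjC_cmx (G : 'M[R]_(m, n)) : map_mx Num.conj (cmx G) = cmx G.
Proof. by apply/matrixP => i j; rewrite !mxE conjC_complexE conjc_real. Qed.

Lemma adjmx_cmx (G : 'M[R]_(m, n)) : (cmx G)^t* = cmx G^T.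
Proof. by rewrite -map_trmx conjC_cmx map_trmx. Qed.

Lemma adjmx_mul l (A : 'M[C]_(m, n)) (B : 'M[C]_(n, l)) : (A *m B)^t* = B^t* *m A^t*.
Proof. by rewrite trmx_mul map_mxM. Qed.

Lemma remx_sumZ (I : finType) (z : I -> C) (X : I -> 'M[C]_(m, n)) :
  remx (\sum_a z a *: X a) = \sum_a (Re (z a) *: remx (X a) - Im (z a) *: immx (X a)).
Proof.
apply/matrixP => i j; rewrite mxE !summxE Re_sum; apply: eq_bigr => a _.
by rewrite !mxE Re_mulc.
Qed.

Lemma immx_sumZ (I : finType) (z : I -> C) (X : I -> 'M[C]_(m, n)) :
  immx (\sum_a z a *: X a) = \sum_a (Re (z a) *: immx (X a) + Im (z a) *: remx (X a)).
Proof.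
apply/matrixP => i j; rewrite mxE !summxE Im_sum; apply: eq_bigr => a _.
by rewrite !mxE Im_mulc.
Qed.

End RealImaginaryParts.
End ComplexMatrices.

Definition circle_expansion (R : realType) (n p : nat) (g : R -> 'M[R]_(n, p)) :=
  exists (m : nat) (a b : nat -> R) (C0 : 'M[R]_(n, p)) (E : nat -> 'M[R]_(n, p)),
    (forall i j : nat, (i < m.*2)%N -> (j < m.*2)%N ->
       frob (E i) (E j) = (i == j)%:R) /\
    forall t : R,
      g t = C0 + \sum_(i < m) a i *: (cos (b i * t) *: E i.*2 + sin (b i * t) *: E i.*2.+1).

Section HarmonicSum.
Variables (R : realType) (n p : nat) (I : finType).
Variables (X : I -> 'M[R[i]]_(n, p)) (w : I -> R).
Hypothesis X_adj_orth : forall a b, w a != w b -> \tr ((X a)^t* *m X b) = 0.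
Hypothesis X_trmx_orth : forall a b, w a + w b != 0 -> \tr ((X a)^T *m X b) = 0.

Local Notation P a := (remx (X a)).
Local Notation Q a := (immx (X a)).

Lemma frob_ReIm_freq_neq a b : w a != w b -> w a != - w b ->
  [/\ frob (P a) (P b) = 0, frob (Q a) (Q b) = 0,
      frob (P a) (Q b) = 0 & frob (Q a) (P b) = 0].
Proof.
move=> neq_ab neqN_ab.
have := Re_trace_trmx_mul (X a) (X b); have := Im_trace_trmx_mul (X a) (X b).
have := Re_trace_adj_mul (X a) (X b); have := Im_trace_adj_mul (X a) (X b).
rewrite X_adj_orth // X_trmx_orth ?addr_eq0 //= => *; split; lra.
Qed.

Lemma frob_ReIm_freq_eq a b : w a = w b -> w a != 0 ->
  frob (P a) (P b) = frob (Q a) (Q b) /\ frob (P a) (Q b) + frob (Q a) (P b) = 0.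
Proof.
move=> eq_ab nz_a.
have := Re_trace_trmx_mul (X a) (X b); have := Im_trace_trmx_mul (X a) (X b).
by rewrite X_trmx_orth -?eq_ab -?mulr2n ?mulrn_eq0 //= => *; split; lra.
Qed.

Lemma frob_ReIm_freq_opp a b : w a = - w b -> w a != 0 ->
  frob (P a) (P b) + frob (Q a) (Q b) = 0 /\ frob (P a) (Q b) = frob (Q a) (P b).
Proof.
move=> opp_ab nz_a.
have neq_ab : w a != w b by apply: contraNneq nz_a => eq_ab; lra.
have := Re_trace_adj_mul (X a) (X b); have := Im_trace_adj_mul (X a) (X b).
by rewrite X_adj_orth //= => *; split; lra.
Qed.

(* [modeRe f] and [modeIm f] are the real and imaginary parts of
   [\sum_(w a = f) X a + \sum_(w a = - f) (X a)^*], which collects all the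
   terms of frequency [f] or [- f]. *)
Definition modeRe_coef f a : R := (w a == f)%:R + (w a == - f)%:R.
Definition modeIm_coef f a : R := (w a == f)%:R - (w a == - f)%:R.
Definition modeRe f := \sum_a modeRe_coef f a *: P a.
Definition modeIm f := \sum_a modeIm_coef f a *: Q a.

Lemma mode_coef_spec f a : 0 < f ->
  [\/ [/\ w a = f, modeRe_coef f a = 1 & modeIm_coef f a = 1],
      [/\ w a = - f, modeRe_coef f a = 1 & modeIm_coef f a = -1] |
      [/\ w a != f, w a != - f, modeRe_coef f a = 0 & modeIm_coef f a = 0]].
Proof.
move=> f_gt0; rewrite /modeRe_coef /modeIm_coef.
have [eq|neq] := eqVneq (w a) f; have [eqN|neqN] := eqVneq (w a) (- f).
- by exfalso; lra.
- by apply: Or31; rewrite addr0 subr0.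
- by apply: Or32; rewrite add0r sub0r.
- by apply: Or33; rewrite addr0 subr0.
Qed.

Lemma mode_support_orth f g a b : 0 < f -> 0 < g -> f != g ->
  (modeRe_coef f a != 0) || (modeIm_coef f a != 0) ->
  (modeRe_coef g b != 0) || (modeIm_coef g b != 0) ->
  [/\ frob (P a) (P b) = 0, frob (Q a) (Q b) = 0,
      frob (P a) (Q b) = 0 & frob (Q a) (P b) = 0].
Proof.
move=> f_gt0 g_gt0 /eqP neq_fg.
case: (mode_coef_spec a f_gt0) => [][]; last by move=> _ _ -> ->; rewrite eqxx.
all: move=> wa _ _ _; case: (mode_coef_spec b g_gt0) => [][]; last first.
all: try by move=> _ _ -> ->; rewrite eqxx.
all: by move=> wb _ _ _; apply: frob_ReIm_freq_neq; apply/eqP; lra.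
Qed.

Lemma mode_orth f g : 0 < f -> 0 < g -> f != g ->
  [/\ frob (modeRe f) (modeRe g) = 0, frob (modeIm f) (modeIm g) = 0
    & frob (modeRe f) (modeIm g) = 0].
Proof.
move=> f_gt0 g_gt0 neq_fg.
have orth a b := @mode_support_orth f g a b f_gt0 g_gt0 neq_fg.
rewrite !frob_sumZ; split; apply: big1 => a _; apply: big1 => b _.
- have [->|fa] := eqVneq (modeRe_coef f a) 0; first by rewrite !mul0r.
  have [->|gb] := eqVneq (modeRe_coef g b) 0; first by rewrite mulr0 mul0r.
  by case: (orth a b); rewrite ?fa ?gb ?orbT // => -> _ _ _; rewrite mulr0.
- have [->|fa] := eqVneq (modeIm_coef f a) 0; first by rewrite !mul0r.
  have [->|gb] := eqVneq (modeIm_coef g b) 0; first by rewrite mulr0 mul0r.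
  by case: (orth a b); rewrite ?fa ?gb ?orbT // => _ -> _ _; rewrite mulr0.
- have [->|fa] := eqVneq (modeRe_coef f a) 0; first by rewrite !mul0r.
  have [->|gb] := eqVneq (modeIm_coef g b) 0; first by rewrite mulr0 mul0r.
  by case: (orth a b); rewrite ?fa ?gb ?orbT // => _ _ -> _; rewrite mulr0.
Qed.

Ltac freq_cases a b :=
  first [ have [] := @frob_ReIm_freq_eq a b ltac:(lra) ltac:(apply/eqP; lra)
        | have [] := @frob_ReIm_freq_opp a b ltac:(lra) ltac:(apply/eqP; lra) ];
  move=> *; lra.

Lemma mode_norm_eq f : 0 < f -> frob (modeRe f) (modeRe f) = frob (modeIm f) (modeIm f).
Proof.
move=> f_gt0; apply/eqP; rewrite -subr_eq0 !frob_sumZ -sumrB; apply/eqP.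
apply: big1 => a _; rewrite -sumrB; apply: big1 => b _.
case: (mode_coef_spec a f_gt0) => [][]; last by move=> _ _ -> ->; rewrite !mul0r subrr.
all: move=> wa -> ->; case: (mode_coef_spec b f_gt0) => [][].
all: try by move=> _ _ -> ->; rewrite !mulr0 !mul0r subrr.
all: by move=> wb -> ->; freq_cases a b.
Qed.

Lemma mode_ReIm_orth f : 0 < f -> frob (modeRe f) (modeIm f) = 0.
Proof.
move=> f_gt0.
suff : frob (modeRe f) (modeIm f) + frob (modeIm f) (modeRe f) = 0.
  by rewrite (frobC (modeIm f)); lra.
rewrite !frob_sumZ -big_split; apply: big1 => a _ /=.
rewrite -big_split; apply: big1 => b _ /=.
case: (mode_coef_spec a f_gt0) => [][]; last by move=> _ _ -> ->; rewrite !mul0r addr0.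
all: move=> wa -> ->; case: (mode_coef_spec b f_gt0) => [][].
all: try by move=> _ _ -> ->; rewrite !mulr0 !mul0r addr0.
all: by move=> wb -> ->; freq_cases a b.
Qed.

Definition freqs := undup [seq `|w a| | a <- enum I & w a != 0].

Lemma freqs_gt0 f : f \in freqs -> 0 < f.
Proof.
by rewrite mem_undup => /mapP [a]; rewrite mem_filter => /andP [wa _] ->; rewrite normr_gt0.
Qed.

Lemma harmonic_sum_regroup t :
  \sum_a (cos (w a * t) *: P a - sin (w a * t) *: Q a) =
  \sum_a (w a == 0)%:R *: P a +
  \sum_(f <- freqs) (cos (f * t) *: modeRe f - sin (f * t) *: modeIm f).
Proof.
under [X in _ = _ + X]eq_bigr do rewrite !scaler_sumr -sumrB.
rewrite exchange_big /= -big_split /=; apply: eq_bigr => a _.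
have off_mode f : f \in freqs -> f != `|w a| ->
    cos (f * t) *: (modeRe_coef f a *: P a) - sin (f * t) *: (modeIm_coef f a *: Q a) = 0.
  move=> /freqs_gt0 f_gt0 neq_f; case: (mode_coef_spec a f_gt0) => [][].
  - by move=> wa; move: neq_f; rewrite wa gtr0_norm // eqxx.
  - by move=> wa; move: neq_f; rewrite wa normrN gtr0_norm // eqxx.
  - by move=> _ _ -> ->; rewrite !scale0r !scaler0 subrr.
have [wa0|wa_neq0] := eqVneq (w a) 0.
  rewrite wa0 mul0r cos0 sin0 scale1r scale0r subr0 big1_seq ?addr0 //.
  by move=> f /andP [_ f_in]; apply: off_mode; rewrite // wa0 normr0 gt_eqF ?freqs_gt0.
have wa_in : `|w a| \in freqs.
  by rewrite mem_undup; apply/mapP; exists a; rewrite // mem_filter wa_neq0 mem_enum.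
rewrite (bigD1_seq _ wa_in (undup_uniq _)) /= big1_seq ?addr0; last first.
  by move=> f /andP [neq_f f_in]; apply: off_mode.
rewrite scale0r add0r.
have norm_gt0 : 0 < `|w a| by rewrite normr_gt0.
case: (mode_coef_spec a norm_gt0) => [][].
- by move=> <- -> ->; rewrite !scale1r.
- move=> wa -> ->; have -> : `|w a| = - w a by lra.
  by rewrite mulNr cosN sinN scale1r scaleN1r scaleNr scalerN opprK.
- move=> /eqP neq_norm /eqP neqN_norm _ _; exfalso.
  have [/ger0_norm|/ltr0_norm] := lerP 0 (w a); last by move=> eqN; apply: neqN_norm; lra.
  by move=> eq_norm; apply: neq_norm.
Qed.

Lemma modeIm_eq0 f : 0 < f -> modeRe f = 0 -> modeIm f = 0.
Proof. by move=> f_gt0 Re0; apply/eqP; rewrite -frob_eq0 -mode_norm_eq // Re0 frob_eq0. Qed.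

Definition active_freqs := [seq f <- freqs | modeRe f != 0].
Definition mode_norm f := Num.sqrt (frob (modeRe f) (modeRe f)).
Definition mode_frame k :=
  let f := nth 0 active_freqs k./2 in
  (mode_norm f)^-1 *: (if odd k then - modeIm f else modeRe f).

Lemma active_freqs_gt0 f : f \in active_freqs -> 0 < f.
Proof. by rewrite mem_filter => /andP [_ /freqs_gt0]. Qed.

Lemma mode_norm_gt0 f : f \in active_freqs -> 0 < mode_norm f.
Proof.
rewrite mem_filter /mode_norm sqrtr_gt0 lt0r frob_ge0 frob_eq0 andbT.
by case/andP.
Qed.

Lemma sqr_mode_norm f : mode_norm f ^+ 2 = frob (modeRe f) (modeRe f).
Proof. by rewrite sqr_sqrtr // frob_ge0. Qed.

Lemma mode_frame_orthonormal i j :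
  (i < (size active_freqs).*2)%N -> (j < (size active_freqs).*2)%N ->
  frob (mode_frame i) (mode_frame j) = (i == j)%:R.
Proof.
rewrite -!ltn_half_double => lt_i lt_j.
have fi_in := mem_nth 0 lt_i; have fj_in := mem_nth 0 lt_j.
rewrite /mode_frame frobZl frobC frobZl frobC.
set fi := nth 0 _ i./2 in fi_in *; set fj := nth 0 _ j./2 in fj_in *.
have [eq_half|neq_half] := eqVneq i./2 j./2; last first.
  have neq_f : fi != fj by rewrite nth_uniq ?filter_uniq ?undup_uniq.
  have [RR II RI] := mode_orth (active_freqs_gt0 fi_in) (active_freqs_gt0 fj_in) neq_f.
  have neq_f' : fj != fi by rewrite eq_sym.
  have [_ _ IR] := mode_orth (active_freqs_gt0 fj_in) (active_freqs_gt0 fi_in) neq_f'.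
  have -> : (i == j) = false by apply: contraNF neq_half => /eqP ->.
  by case: (odd i); case: (odd j);
    rewrite ?frobNl ?frobNr ?RR ?II ?RI ?(frobC (modeIm fi)) ?IR ?oppr0 ?mulr0.
have -> : fj = fi by rewrite /fj -eq_half.
have norm_neq0 := lt0r_neq0 (mode_norm_gt0 fi_in).
have ReIm := mode_ReIm_orth (active_freqs_gt0 fi_in).
have ij : (i == j) = (odd i == odd j).
  apply/eqP/eqP => [-> //|eq_odd].
  by rewrite -(odd_double_half i) -(odd_double_half j) eq_odd eq_half.
rewrite ij; case: (odd i); case: (odd j) => /=;
  rewrite ?frobNl ?frobNr ?opprK ?ReIm ?(frobC (modeIm fi)) ?ReIm ?oppr0 ?mulr0 //.
  by rewrite -mode_norm_eq ?(active_freqs_gt0 fi_in) // -sqr_mode_norm expr2 mulKf ?mulVf.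
by rewrite -sqr_mode_norm expr2 mulKf ?mulVf.
Qed.

Lemma harmonic_sum_frameE t :
  \sum_a (cos (w a * t) *: P a - sin (w a * t) *: Q a) =
  \sum_a (w a == 0)%:R *: P a +
  \sum_(i < size active_freqs) mode_norm (nth 0 active_freqs i) *:
     (cos (nth 0 active_freqs i * t) *: mode_frame i.*2 +
      sin (nth 0 active_freqs i * t) *: mode_frame i.*2.+1).
Proof.
rewrite harmonic_sum_regroup; congr (_ + _).
rewrite (bigID (fun f => modeRe f != 0)) /= [X in _ + X]big1_seq ?addr0; last first.
  move=> f /andP [/negPn/eqP Re0 /freqs_gt0 f_gt0].
  by rewrite Re0 (modeIm_eq0 f_gt0 Re0) !scaler0 subrr.
rewrite -big_filter (big_nth 0) big_mkord; apply: eq_bigr => i _.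
rewrite /mode_frame /= doubleK uphalf_double odd_double /=.
set f := nth 0 _ i; have /lt0r_neq0 norm_neq0 : 0 < mode_norm f.
  by apply/mode_norm_gt0/mem_nth.
by rewrite scalerDr !scalerA ![mode_norm f * _]mulrC !mulfK // scalerN.
Qed.

Theorem expi_sum_circle_expansion (g : R -> 'M[R]_(n, p)) :
  (forall t, cmx (g t) = \sum_a expi (w a * t) *: X a) -> circle_expansion g.
Proof.
move=> gE; exists (size active_freqs), (fun i => mode_norm (nth 0 active_freqs i)).
exists (nth 0 active_freqs), (\sum_a (w a == 0)%:R *: P a), mode_frame.
split; first exact: mode_frame_orthonormal.
by move=> t; rewrite -harmonic_sum_frameE -[g t]remx_cmx gE remx_sumZ.
Qed.

End HarmonicSum.

Section ExpiSeries.
Variable R : realType.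

Lemma expr_imag_even (x : R) k : (x *i)%C ^+ k.*2 = ((-1) ^+ k * x ^+ k.*2)%:C%C.
Proof.
have sqr_imag : (x *i)%C ^+ 2 = (- x ^+ 2)%:C%C.
  by rewrite expr2; apply/eqP; rewrite eq_complex /= !mul0r !mulr0 sub0r addr0 expr2 !eqxx.
by rewrite -mul2n exprM sqr_imag -rmorphXn /= exprM -exprMn mulN1r.
Qed.

Lemma Re_expr_imag (x : R) k :
  Re ((x *i)%C ^+ k) = (~~ odd k)%:R * (-1) ^+ k./2 * x ^+ k.
Proof.
rewrite -[k](odd_double_half k); case: (odd k) => /=.
  by rewrite add1n exprS expr_imag_even /= add0n odd_double /= mulr0n !mul0r mulr0 subr0.
by rewrite add0n expr_imag_even /= odd_double doubleK /= mul1r.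
Qed.

Lemma Im_expr_imag (x : R) k :
  Im ((x *i)%C ^+ k) = (odd k)%:R * (-1) ^+ k.-1./2 * x ^+ k.
Proof.
rewrite -[k](odd_double_half k); case: (odd k) => /=.
  rewrite add1n exprS expr_imag_even /= add0n odd_double doubleK /=.
  by rewrite mul0r add0r mul1r exprSr mulrCA [x * _]mulrC.
by rewrite add0n expr_imag_even /= odd_double mulr0n !mul0r.
Qed.

Definition expi_series (N : nat) (x : R) : R[i] :=
  \sum_(0 <= k < N) ((k`!%:R)^-1)%:C%C * (x *i)%C ^+ k.

Lemma cvg_Re_expi_series x : (fun N => Re (expi_series N x)) @ \oo --> cos x.
Proof.
have -> : (fun N => Re (expi_series N x)) = series (cos_coeff x).
  apply/funext => N; rewrite Re_sum /series /=; apply: eq_bigr => k _.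
  by rewrite Re_mulc /= mul0r subr0 Re_expr_imag mulrC.
by rewrite unlock; exact: is_cvg_series_cos_coeff.
Qed.

Lemma cvg_Im_expi_series x : (fun N => Im (expi_series N x)) @ \oo --> sin x.
Proof.
have -> : (fun N => Im (expi_series N x)) = series (sin_coeff x).
  apply/funext => N; rewrite Im_sum /series /=; apply: eq_bigr => k _.
  by rewrite Im_mulc /= mul0r addr0 Im_expr_imag mulrC.
by rewrite unlock; exact: is_cvg_series_sin_coeff.
Qed.

End ExpiSeries.

Definition skew_projectors (R : realType) (q : nat)
    (K : 'I_q -> 'M[R[i]]_q) (th : 'I_q -> R) :=
  [/\ forall j j', K j *m K j' = (j == j')%:R *: K j,
       forall j, (K j)^t* = K j,
       forall j j', th j + th j' != 0 -> (K j)^T *m K j' = 0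
     & forall j j', th j + th j' != 0 -> K j' *m (K j)^T = 0].

Section SkewSpectral.
Variables (R : realType) (q : nat) (S : 'M[R]_q).
Hypothesis S_skew : S^T = - S.
Local Notation C := R[i].

Let Sc := cmx S.
Let V := spectralmx Sc.
Let d := spectral_diag Sc.

Lemma trmx_cmx_skew : Sc^T = - Sc.
Proof. by rewrite /Sc map_trmx S_skew map_mxN. Qed.

Lemma adj_cmx_skew : Sc^t* = - Sc.
Proof. by rewrite adjmx_cmx S_skew map_mxN. Qed.

Lemma spectral_mul_adj : V *m V^t* = 1%:M.
Proof. exact/unitarymxP/spectral_unitarymx. Qed.

Lemma spectral_adj_mul : V^t* *m V = 1%:M.
Proof. by have := mulmxKtV 1%:M (spectral_unitarymx Sc) erefl; rewrite mul1mx. Qed.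

Lemma cmx_skew_spectralE : Sc = V^t* *m diag_mx d *m V.
Proof.
have /orthomx_spectralP : Sc \is normalmx.
  by apply/normalmxP; rewrite adj_cmx_skew mulmxN mulNmx.
by rewrite invmx_unitary // spectral_unitarymx.
Qed.

Definition eigenproj (j : 'I_q) : 'M[C]_q := V^t* *m delta_mx j j *m V.

Lemma eigenproj_mul j j' : eigenproj j *m eigenproj j' = (j == j')%:R *: eigenproj j.
Proof.
rewrite /eigenproj !mulmxA -(mulmxA _ V) spectral_mul_adj mulmx1.
rewrite -(mulmxA _ _ (delta_mx j' j')) mul_delta_mx_cond.
by case: eqVneq => [<-|_]; rewrite ?scale1r // scale0r mulmx0 mul0mx.
Qed.

Lemma eigenproj_adj j : (eigenproj j)^t* = eigenproj j.
Proof.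
rewrite /eigenproj !trmx_mul !map_mxM trmxCK mulmxA; congr (_ *m _ *m _).
by apply/matrixP => a b; rewrite !mxE rmorph_nat andbC.
Qed.

Lemma sum_eigenproj : \sum_j eigenproj j = 1%:M.
Proof.
rewrite /eigenproj -mulmx_suml -mulmx_sumr.
have -> : \sum_j delta_mx j j = 1%:M :> 'M[C]_q.
  by rewrite -diag_const_mx diag_mx_sum_delta; apply: eq_bigr => j _; rewrite mxE scale1r.
by rewrite mulmx1 spectral_adj_mul.
Qed.

Lemma eigenproj_sumZ_mul (x y : 'I_q -> C) :
  (\sum_j x j *: eigenproj j) *m (\sum_j y j *: eigenproj j) =
  \sum_j (x j * y j) *: eigenproj j.
Proof.
rewrite mulmx_suml; apply: eq_bigr => i _; rewrite mulmx_sumr (bigD1 i) //= big1 ?addr0.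
  by rewrite -scalemxAl -scalemxAr eigenproj_mul eqxx scale1r scalerA.
move=> j neq_ji; rewrite -scalemxAl -scalemxAr eigenproj_mul eq_sym (negbTE neq_ji).
by rewrite mulr0n !scale0r !scaler0.
Qed.

Lemma cmx_skew_eigenE : Sc = \sum_j d 0 j *: eigenproj j.
Proof.
rewrite {1}cmx_skew_spectralE diag_mx_sum_delta mulmx_sumr mulmx_suml.
by apply: eq_bigr => j _; rewrite -scalemxAr -scalemxAl.
Qed.

Lemma cmx_skew_eigenproj j : Sc *m eigenproj j = d 0 j *: eigenproj j.
Proof.
rewrite cmx_skew_eigenE mulmx_suml (bigD1 j) //= big1 => [|i neq_ij].
  by rewrite -scalemxAl eigenproj_mul eqxx scale1r addr0.
by rewrite -scalemxAl eigenproj_mul (negbTE neq_ij) scale0r scaler0.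
Qed.

Lemma eigenproj_cmx_skew j : eigenproj j *m Sc = d 0 j *: eigenproj j.
Proof.
rewrite cmx_skew_eigenE mulmx_sumr (bigD1 j) //= big1 => [|i neq_ij].
  by rewrite -scalemxAr eigenproj_mul eqxx scale1r addr0.
by rewrite -scalemxAr eigenproj_mul eq_sym (negbTE neq_ij) scale0r scaler0.
Qed.

Definition skew_freq j := Im (d 0 j).

Lemma spectral_diag_imag j : d 0 j = ((skew_freq j) *i)%C.
Proof.
have diagE : diag_mx d = V *m Sc *m V^t*.
  rewrite cmx_skew_spectralE !mulmxA spectral_mul_adj mul1mx.
  by rewrite -mulmxA spectral_mul_adj mulmx1.
have : (diag_mx d)^t* = - diag_mx d.
  by rewrite {1}diagE !trmx_mul !map_mxM trmxCK adj_cmx_skew mulNmx mulmxN mulmxA -diagE.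
move/matrixP/(_ j j); rewrite !mxE eqxx !mulr1n conjC_complexE /skew_freq.
by case: (d 0 j) => a b [] /eqP; rewrite -addr_eq0 -mulr2n mulrn_eq0 /= => /eqP ->.
Qed.

Lemma imag_add_eq0 (x y : R) : ((x *i)%C + (y *i)%C == 0) = (x + y == 0).
Proof. by rewrite eq_complex /= addr0 eqxx. Qed.

(* Transposing [Sc K_j = d_j K_j] and using [Sc^T = - Sc] shows that [K_j^T]
   lies in the [- d_j]-eigenspace, whence the orthogonality relations. *)
Lemma trmx_eigenproj_mul j j' :
  skew_freq j + skew_freq j' != 0 -> (eigenproj j)^T *m eigenproj j' = 0.
Proof.
move=> freq_neq0.
have KtSc : (eigenproj j)^T *m Sc = - (d 0 j *: (eigenproj j)^T).
  by rewrite -[Sc]opprK -trmx_cmx_skew mulmxN -trmx_mul cmx_skew_eigenproj linearZ.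
have /eqP : (d 0 j + d 0 j') *: ((eigenproj j)^T *m eigenproj j') = 0.
  rewrite scalerDl [d 0 j' *: _]scalemxAr -cmx_skew_eigenproj (mulmxA _ Sc) KtSc.
  by rewrite mulNmx -scalemxAl addrN.
by rewrite scaler_eq0 !spectral_diag_imag imag_add_eq0 (negbTE freq_neq0) => /eqP.
Qed.

Lemma eigenproj_mul_trmx j j' :
  skew_freq j + skew_freq j' != 0 -> eigenproj j' *m (eigenproj j)^T = 0.
Proof.
move=> freq_neq0.
have ScKt : Sc *m (eigenproj j)^T = - (d 0 j *: (eigenproj j)^T).
  by rewrite -[Sc]opprK -trmx_cmx_skew mulNmx -trmx_mul eigenproj_cmx_skew linearZ.
have /eqP : (d 0 j + d 0 j') *: (eigenproj j' *m (eigenproj j)^T) = 0.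
  rewrite scalerDl [d 0 j' *: _]scalemxAl -eigenproj_cmx_skew -(mulmxA _ Sc) ScKt.
  by rewrite mulmxN -scalemxAr addrN.
by rewrite scaler_eq0 !spectral_diag_imag imag_add_eq0 (negbTE freq_neq0) => /eqP.
Qed.

Lemma cmx_exprn (X : 'M[R]_q) k : cmx (X ^+ k) = cmx X ^+ k.
Proof. by elim: k => [|k IHk]; rewrite ?expr0 ?map_mx1 // !exprS -!mulmxE map_mxM IHk. Qed.

Lemma cmx_skew_exprn c k :
  cmx (c *: S) ^+ k = \sum_j ((c * skew_freq j) *i)%C ^+ k *: eigenproj j.
Proof.
elim: k => [|k IHk].
  rewrite expr0 -[1]/(1%:M : 'M[C]_q) -sum_eigenproj.
  by apply: eq_bigr => j _; rewrite expr0 scale1r.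
rewrite exprS -mulmxE IHk map_mxZ -/Sc cmx_skew_eigenE scaler_sumr.
under eq_bigr do rewrite scalerA spectral_diag_imag.
rewrite eigenproj_sumZ_mul; apply: eq_bigr => j _; rewrite exprS; congr (_ * _ *: _).
by apply/eqP; rewrite eq_complex /= !mul0r !mulr0 subr0 addr0 !eqxx.
Qed.

Lemma cmx_exp_partial c N :
  cmx (series (fun k => (k`!%:R)^-1 *: (c *: S) ^+ k) N) =
  \sum_j expi_series N (c * skew_freq j) *: eigenproj j.
Proof.
rewrite /series /= map_mx_sum.
under eq_bigr do rewrite map_mxZ cmx_exprn cmx_skew_exprn scaler_sumr.
rewrite exchange_big /=; apply: eq_bigr => j _.
by rewrite /expi_series scaler_suml; apply: eq_bigr => k _; rewrite scalerA.
Qed.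

Lemma expm_skewE c : cmx (expm (c *: S)) = \sum_j expi (skew_freq j * c) *: eigenproj j.
Proof.
set M := \sum_j _.
pose sN := series (fun k => (k`!%:R)^-1 *: (c *: S) ^+ k).
have sN_cvg : sN @ \oo --> remx M.
  under eq_cvg do rewrite -[sN _]remx_cmx cmx_exp_partial remx_sumZ.
  rewrite remx_sumZ; apply: cvg_big => // [|j _]; first exact: add_continuous.
  rewrite [skew_freq j * c]mulrC; apply: cvgB; apply: cvgZr_tmp.
    exact: cvg_Re_expi_series.
  exact: cvg_Im_expi_series.
have zero_cvg : (fun=> 0) @ \oo --> immx M.
  under eq_cvg => N do rewrite -(immx_cmx (sN N)) cmx_exp_partial immx_sumZ.
  rewrite immx_sumZ; apply: cvg_big => // [|j _]; first exact: add_continuous.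
  rewrite [skew_freq j * c]mulrC; apply: cvgD; apply: cvgZr_tmp.
    exact: cvg_Re_expi_series.
  exact: cvg_Im_expi_series.
have -> : expm (c *: S) = remx M by apply: cvg_lim sN_cvg.
by apply: cmx_remx; apply: (cvg_unique _ zero_cvg) => //; exact: cvg_cst.
Qed.

Lemma eigenproj_skew_projectors : skew_projectors eigenproj skew_freq.
Proof.
split; [exact: eigenproj_mul | exact: eigenproj_adj |
        exact: trmx_eigenproj_mul | exact: eigenproj_mul_trmx].
Qed.
End SkewSpectral.

Section Sandwich.
Variables (R : realType) (n N p : nat) (Z : 'M[R]_(n, N)) (W : 'M[R]_(N, p)).
Variables (K1 : 'I_N -> 'M[R[i]]_N) (th1 : 'I_N -> R).
Variables (K2 : 'I_p -> 'M[R[i]]_p) (th2 : 'I_p -> R).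
Hypotheses (Z_orth : Z^T *m Z = 1%:M).
Hypotheses (K1_proj : skew_projectors K1 th1) (K2_proj : skew_projectors K2 th2).

Definition sandwich_term (jl : 'I_N * 'I_p) : 'M[R[i]]_(n, p) :=
  cmx Z *m K1 jl.1 *m cmx W *m K2 jl.2.
Definition sandwich_freq (jl : 'I_N * 'I_p) : R := th1 jl.1 - th2 jl.2.

Lemma sandwich_term_adj_orth a b : sandwich_freq a != sandwich_freq b ->
  \tr ((sandwich_term a)^t* *m sandwich_term b) = 0.
Proof.
have [K1_mul K1_adj _ _] := K1_proj; have [K2_mul K2_adj _ _] := K2_proj.
case: a b => [j1 l1] [j2 l2]; rewrite /sandwich_freq /sandwich_term /= => neq_freq.
rewrite !adjmx_mul K1_adj K2_adj !adjmx_cmx !mulmxA -(mulmxA _ (cmx Z^T)) -map_mxM.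
rewrite Z_orth map_mx1 mulmx1 -(mulmxA _ (K1 j1)) K1_mul.
have [eq_j|_] := eqVneq j1 j2; last by rewrite mulr0n scale0r mulmx0 !mul0mx mxtrace0.
rewrite mulr1n scale1r mxtrace_mulC !mulmxA K2_mul.
have [eq_l|_] := eqVneq l2 l1; first by move: neq_freq; rewrite eq_j eq_l eqxx.
by rewrite mulr0n scale0r !mul0mx mxtrace0.
Qed.

Lemma sandwich_term_trmx_orth a b : sandwich_freq a + sandwich_freq b != 0 ->
  \tr ((sandwich_term a)^T *m sandwich_term b) = 0.
Proof.
have [_ _ K1_orth _] := K1_proj; have [_ _ _ K2_orth] := K2_proj.
case: a b => [j1 l1] [j2 l2]; rewrite /sandwich_freq /sandwich_term /= => freq_neq0.
rewrite !trmx_mul !mulmxA -(mulmxA _ (cmx Z)^T) map_trmx -map_mxM Z_orth map_mx1 mulmx1.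
have [th1_eq0|th1_neq0] := eqVneq (th1 j1 + th1 j2) 0; last first.
  by rewrite -(mulmxA _ (K1 j1)^T) K1_orth // mulmx0 !mul0mx mxtrace0.
rewrite mxtrace_mulC !mulmxA K2_orth ?mul0mx ?mxtrace0 //.
by apply: contraNneq freq_neq0 => th2_eq0; rewrite addrACA th1_eq0 -opprD th2_eq0 subrr.
Qed.

Lemma sandwich_sumZ (F1 : 'I_N -> R[i]) (F2 : 'I_p -> R[i]) :
  cmx Z *m (\sum_j F1 j *: K1 j) *m cmx W *m (\sum_l F2 l *: K2 l) =
  \sum_a (F1 a.1 * F2 a.2) *: sandwich_term a.
Proof.
rewrite -(pair_bigA _ (fun j l => (F1 j * F2 l) *: sandwich_term (j, l))) /=.
rewrite (mulmx_sumr (cmx Z)) (mulmx_suml (cmx W)) mulmx_sumr [RHS]exchange_big /=.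
apply: eq_bigr => l _; rewrite (mulmx_suml (F2 l *: K2 l)); apply: eq_bigr => j _.
by rewrite -!scalemxAr -!scalemxAl scalerA mulrC.
Qed.

End Sandwich.

Theorem skew_sandwich_circle_expansion (R : realType) (n N p : nat)
    (Z : 'M[R]_(n, N)) (W : 'M[R]_(N, p)) (S1 : 'M[R]_N) (S2 : 'M[R]_p) :
  Z^T *m Z = 1%:M -> S1^T = - S1 -> S2^T = - S2 ->
  circle_expansion (fun t => Z *m expm (t *: S1) *m W *m expm (- t *: S2)).
Proof.
move=> Z_orth S1_skew S2_skew.
have K1_proj := eigenproj_skew_projectors S1_skew.
have K2_proj := eigenproj_skew_projectors S2_skew.
apply: (@expi_sum_circle_expansion _ _ _ _
  (sandwich_term Z W (eigenproj S1) (eigenproj S2))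
  (sandwich_freq (skew_freq S1) (skew_freq S2))).
- exact: sandwich_term_adj_orth.
- exact: sandwich_term_trmx_orth.
move=> t; rewrite !map_mxM !expm_skewE // sandwich_sumZ; apply: eq_bigr => a _.
by rewrite expiD /sandwich_freq mulrN mulrBl.
Qed.

Theorem corollary3p3 (R : realType) (n p : nat) (hp : (1 <= p)%N) (hnp : (p <= n)%N)
  (U D : 'M[R]_(n, p)) (hU : stiefel U) (hD : tangent_stiefel U D)
  (k : nat) (Q : 'M[R]_(n, k)) (B : 'M[R]_(k, p)) (hQB : QB_decomp U D Q B) :
  exists (m : nat) (a b : nat -> R) (C0 : 'M[R]_(n, p)) (E : nat -> 'M[R]_(n, p)),
    (forall i j : nat, (i < m.*2)%N -> (j < m.*2)%N ->
       frob (E i) (E j) = (i == j)%:R) /\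
    forall t : R,
      stiefel_exp U D Q B t =
      C0 + \sum_(i < m) a i *: (cos (b i * t) *: E i.*2 + sin (b i * t) *: E i.*2.+1).
Proof.
case: hQB => QtQ UtQ _; rewrite /stiefel /tangent_stiefel in hU hD.
have A_skew : (U^T *m D)^T = - (U^T *m D) by rewrite trmx_mul trmxK hD opprK.
apply: skew_sandwich_circle_expansion.
- have QtU : Q^T *m U = 0 by rewrite -(trmxK U) -trmx_mul UtQ trmx0.
  by rewrite tr_row_mx mul_col_row hU QtQ UtQ QtU -scalar_mx_block.
- rewrite tr_block_mx opp_block_mx !linearZ /= A_skew scalerN linearN /= trmxK.
  by rewrite trmx0 oppr0 opprK.
- exact: A_skew.
Qed.
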